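(* For $n\geq1$, $\sum_{\pi\in\mathfrak{S}_n}x^{\mathrm{cpk}(\pi)}(-1)^{n-\mathrm{cyc}(\pi)}=(1-x)^{\lfloor n/2\rfloor}$.
   Context: For $\pi\in\mathfrak{S}_n$, $\mathrm{cyc}(\pi)$ is the number of cycles and a cycle peak is an $i\in[n]$ with $\pi^{-1}(i)<i>\pi(i)$; $\mathrm{cpk}(\pi)$ is the number of cycle peaks. *)

From mathcomp Require Import all_boot all_order all_algebra all_fingroup.
Set Implicit Arguments. Unset Strict Implicit. Unset Printing Implicit Defensive.
Import GRing.Theory.

(* Number of cycles of a permutation (fixed points count as cycles). *)
Definition cyc n (s : 'S_n) : nat := #|porbits s|.

(* Cycle peak: i with s^-1(i) < i > s(i) (values compared as naturals 0..n-1,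
   order-isomorphic to 1..n). *)
Definition is_cpeak n (s : 'S_n) (i : 'I_n) : bool :=
  ((s^-1)%g i < i)%N && (s i < i)%N.

Definition cpk n (s : 'S_n) : nat := #|[set i | is_cpeak s i]|.

(* Inserting a new maximal point into a permutation s of [n] -- as a fixed point, or
   right after some j in its cycle -- is a bijection S_n * [n+1] -> S_(n+1).  A new
   fixed point changes neither the sign nor the cycle peaks.  Insertion after j flips
   the sign, makes the new point a cycle peak and destroys the peaks at j and s(j), at
   most one of which exists.  As j and s(j) both run over [n], summing over j gives,
   for F_n = sum_s x^cpk(s) sgn(s),
     F_(n+1) = (1 - n x) F_n - 2 x (1 - x) F_n',
   which (1 - x)^(n/2) solves.  Finally (-1)^(n - cyc s) is the sign of s. *)

From mathcomp Require Import all_boot all_order all_algebra all_fingroup.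
From mathcomp Require Import ring.
Import GRing.Theory.

Set Implicit Arguments.
Unset Strict Implicit.
Unset Printing Implicit Defensive.

Lemma card_mem_sum (T : finType) (A : {pred T}) : #|A| = \sum_x (x \in A).
Proof. by rewrite -sum1_card big_mkcond; apply: eq_bigr => x _; case: (x \in A). Qed.

Section CyclePeaks.
Variable n : nat.
Implicit Types (s : 'S_n) (i : 'I_n).

Definition cpeaks s : {set 'I_n} := [set i | is_cpeak s i].

Lemma cpk1 : cpk (1 : 'S_n)%g = 0.
Proof.
by apply/eqP; rewrite cards_eq0; apply/eqP/setP => i; rewrite !inE /is_cpeak invg1 perm1 ltnn.
Qed.

Lemma cpeak_fixed s i : s i = i -> is_cpeak s i = false.
Proof. by move=> si; rewrite /is_cpeak si ltnn andbF. Qed.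

Lemma cpeak_next s i : is_cpeak s i -> is_cpeak s (s i) = false.
Proof. by case/andP=> _ lt_si_i; rewrite /is_cpeak permK ltnNge (ltnW lt_si_i). Qed.

Lemma cpk_split s i :
  cpk s = (i \in cpeaks s) + (s i \in cpeaks s) + #|cpeaks s :\ i :\ s i|.
Proof.
rewrite /cpk -/(cpeaks s) (cardsD1 i) (cardsD1 (s i) (cpeaks s :\ i)) addnA.
congr (_ + _ + _); rewrite !inE; have [si_i|//] := eqVneq (s i) i.
by rewrite si_i cpeak_fixed.
Qed.

Lemma cpeaks_next_le1 s i : (i \in cpeaks s) + (s i \in cpeaks s) <= 1.
Proof.
by rewrite !inE; case: (boolP (is_cpeak s i)) => [/cpeak_next ->|_]; rewrite ?leq_b1.
Qed.

Lemma sum_cpeaks_next s :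
  \sum_i ((i \in cpeaks s) + (s i \in cpeaks s)) = (cpk s).*2.
Proof.
rewrite big_split /= -addnn /cpk -/(cpeaks s) card_mem_sum; congr (_ + _).
by rewrite [RHS](reindex_inj (@perm_inj _ s)).
Qed.

End CyclePeaks.

Section CycleInsertion.
Variable n : nat.
Implicit Types (s : 'S_n) (i j : 'I_n).
Local Notation up := (widen_ord (leqnSn n)).

Definition perm_ext s : 'S_n.+1 := lift_perm ord_max ord_max s.

(* [insert_max s j] puts [ord_max] right after [j] in its cycle, [j -> ord_max -> s j];
   for [j = ord_max] it becomes a fixed point. *)
Definition insert_max s (j : 'I_n.+1) : 'S_n.+1 := (tperm j ord_max * perm_ext s)%g.

Lemma up_lift i : up i = lift ord_max i.
Proof. by apply: val_inj; rewrite [RHS]lift_max. Qed.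

Lemma up_inj : injective up.
Proof. by move=> i j /(congr1 val) /= /val_inj. Qed.

Lemma up_neq_max i : (up i == ord_max) = false.
Proof. by apply/negbTE; rewrite neq_ltn /= ltn_ord. Qed.

Lemma perm_ext_up s i : perm_ext s (up i) = up (s i).
Proof. by rewrite !up_lift lift_perm_lift. Qed.

Lemma perm_ext_max s : perm_ext s ord_max = ord_max.
Proof. exact: lift_perm_id. Qed.

Lemma perm_extV s : (perm_ext s)^-1%g = perm_ext s^-1.
Proof. exact: lift_permV. Qed.

Lemma tperm_up_max i j : tperm (up j) ord_max (up i) = if i == j then ord_max else up i.
Proof.
case: eqP => [->|/eqP ne]; first by rewrite tpermL.
by rewrite tpermD // ?(inj_eq up_inj) 1?eq_sym // up_neq_max.
Qed.

Lemma insert_max_max s : insert_max s ord_max = perm_ext s.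
Proof. by rewrite /insert_max tperm1 mul1g. Qed.

Lemma insert_maxE s (j x : 'I_n.+1) : insert_max s j x = perm_ext s (tperm j ord_max x).
Proof. exact: permM. Qed.

Lemma insert_maxVE s (j x : 'I_n.+1) :
  (insert_max s j)^-1%g x = tperm j ord_max (perm_ext s^-1 x).
Proof. by rewrite invMg permM perm_extV tpermV. Qed.

Lemma insert_max_inj : injective (fun p : 'S_n * 'I_n.+1 => insert_max p.1 p.2).
Proof.
move=> [s j] [t k] /= eq_st.
have max_preimage u l : insert_max u l l = ord_max.
  by rewrite insert_maxE tpermL perm_ext_max.
have jk : j = k by apply: (@perm_inj _ (insert_max t k)); rewrite -{1}eq_st !max_preimage.
subst k; move/mulgI: eq_st => eq_st; congr pair; apply/permP => i; apply: up_inj.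
by rewrite -!perm_ext_up eq_st.
Qed.

Lemma sum_insert_max (R : nmodType) (F : 'S_n.+1 -> R) :
  (\sum_(t : 'S_n.+1) F t = \sum_(s : 'S_n) \sum_(j < n.+1) F (insert_max s j) :> R)%R.
Proof.
rewrite (pair_big xpredT xpredT (fun s (j : 'I_n.+1) => F (insert_max s j))) /=.
rewrite (reindex (fun p : 'S_n * 'I_n.+1 => insert_max p.1 p.2)) //.
apply: onW_bij; apply: inj_card_bij; first exact: insert_max_inj.
by rewrite card_prod !card_Sn card_ord factS mulnC.
Qed.

Lemma odd_perm_ext s : odd_perm (perm_ext s) = odd_perm s.
Proof. by rewrite odd_lift_perm addbb. Qed.

Lemma odd_insert_max s j : odd_perm (insert_max s (up j)) = ~~ odd_perm s.
Proof. by rewrite odd_mul_tperm up_neq_max odd_perm_ext. Qed.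

Lemma cpk_recr (t : 'S_n.+1) :
  cpk t = is_cpeak t ord_max + #|[set i : 'I_n | is_cpeak t (up i)]|.
Proof.
rewrite /cpk card_mem_sum big_ord_recr addnC /= inE; congr (_ + _).
by rewrite card_mem_sum; apply: eq_bigr => i _; rewrite !inE.
Qed.

Lemma cpeak_perm_ext s i : is_cpeak (perm_ext s) (up i) = is_cpeak s i.
Proof. by rewrite /is_cpeak perm_extV !perm_ext_up. Qed.

Lemma cpk_perm_ext s : cpk (perm_ext s) = cpk s.
Proof.
rewrite cpk_recr cpeak_fixed ?perm_ext_max //.
by apply: eq_card => i; rewrite !inE cpeak_perm_ext.
Qed.

Lemma cpeak_insert_max_max s j : is_cpeak (insert_max s (up j)) ord_max.
Proof.
by rewrite /is_cpeak insert_maxE insert_maxVE perm_ext_max tpermR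
  perm_ext_up /= !ltn_ord.
Qed.

Lemma cpeak_insert_max s i j :
  is_cpeak (insert_max s (up j)) (up i) = [&& i != s j, i != j & is_cpeak s i].
Proof.
rewrite /is_cpeak insert_maxE insert_maxVE perm_ext_up !tperm_up_max.
have [->|_] := eqVneq i j.
  by rewrite /= perm_ext_max /= (ltnNge n) (ltnW (ltn_ord j)) !andbF.
rewrite [perm_ext s _]perm_ext_up -(inj_eq (@perm_inj _ s)) permKV eq_sym.
by case: eqP => _ //=; rewrite (ltnNge n) (ltnW (ltn_ord i)).
Qed.

Lemma cpk_insert_max s j :
  cpk (insert_max s (up j)) = #|cpeaks s :\ j :\ s j|.+1.
Proof.
rewrite cpk_recr cpeak_insert_max_max add1n; congr (_.+1).
by apply: eq_card => i; rewrite !inE cpeak_insert_max.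
Qed.

Lemma expr_cpk_insert_max (R : pzRingType) (x : R) s j :
  (x ^+ cpk (insert_max s (up j)) = x ^+ (cpk s).+1
    + (x ^+ cpk s - x ^+ (cpk s).+1) *+ ((j \in cpeaks s) + (s j \in cpeaks s)))%R.
Proof.
rewrite cpk_insert_max (cpk_split s j).
move: (cpeaks_next_le1 s j); case: (j \in _); case: (s j \in _) => //= _.
all: by rewrite ?add0n ?add1n ?mulr0n ?addr0 // mulr1n addrC subrK.
Qed.

Lemma sum_insert_max_weight (R : comPzRingType) (x : R) s :
  (\sum_(j < n.+1) x ^+ cpk (insert_max s j) * (-1) ^+ odd_perm (insert_max s j)
   = (x ^+ cpk s * (1 - x *+ n) - (1 - x) * (x ^+ cpk s *+ cpk s) *+ 2)
     * (-1) ^+ odd_perm s)%R.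
Proof.
rewrite big_ord_recr /= insert_max_max cpk_perm_ext odd_perm_ext.
under eq_bigr do rewrite expr_cpk_insert_max odd_insert_max signrN.
rewrite -mulr_suml big_split /= sumr_const card_ord sumrMnr sum_cpeaks_next -muln2.
rewrite exprS; move: (x ^+ cpk s)%R (cpk s) ((-1) ^+ odd_perm s : R)%R => y c e.
ring.
Qed.

End CycleInsertion.

Local Open Scope ring_scope.

Lemma deriv_mul_sign (R : nzRingType) (p : {poly R}) (b : bool) :
  (p * (-1) ^+ b)^`() = p^`() * (-1) ^+ b.
Proof. by case: b; rewrite ?mulr1 // !mulrN1 derivN. Qed.

Lemma mulX_derivXn (R : nzSemiRingType) k : 'X * ('X^k)^`() = 'X^k *+ k :> {poly R}.
Proof. by rewrite derivXn mulrnAr; case: k => [|k]; rewrite ?mulr0n // -exprS. Qed.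

Definition sgn_cpk_poly n : {poly int} := \sum_(s : 'S_n) 'X ^+ cpk s * (-1) ^+ odd_perm s.

Lemma mulX_deriv_sgn_cpk_poly n :
  'X * (sgn_cpk_poly n)^`() = \sum_(s : 'S_n) 'X ^+ cpk s *+ cpk s * (-1) ^+ odd_perm s.
Proof.
rewrite raddf_sum mulr_sumr; apply: eq_bigr => s _.
by rewrite /= deriv_mul_sign mulrA mulX_derivXn.
Qed.

Lemma sgn_cpk_poly0 : sgn_cpk_poly 0 = 1.
Proof.
have perm0_1 (s : 'S_0) : s = 1%g by apply/permP => -[].
rewrite /sgn_cpk_poly (big_pred1 1%g) => [|s]; last by rewrite (perm0_1 s) /= eqxx.
by rewrite cpk1 odd_perm1 mulr1.
Qed.

Lemma sgn_cpk_polyS n :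
  sgn_cpk_poly n.+1 = (1 - 'X *+ n) * sgn_cpk_poly n
                      - (1 - 'X) * ('X * (sgn_cpk_poly n)^`()) *+ 2.
Proof.
rewrite mulX_deriv_sgn_cpk_poly /sgn_cpk_poly sum_insert_max.
under eq_bigr do rewrite sum_insert_max_weight.
rewrite mulr_sumr mulr_sumr -sumrMnl -sumrB; apply: eq_bigr => s _.
move: ('X ^+ cpk s : {poly int}) (cpk s) ((-1) ^+ odd_perm s : {poly int}) => y c e; ring.
Qed.

Lemma sgn_cpk_polyE n : sgn_cpk_poly n = (1 - 'X) ^+ n./2.
Proof.
elim: n => [|n IHn]; first exact: sgn_cpk_poly0.
rewrite sgn_cpk_polyS IHn deriv_exp !derivE -uphalfE uphalf_half.
rewrite -[in 'X *+ n](odd_double_half n) -muln2.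
case: (odd n); case: n./2 => [|h]; rewrite /= ?add0n ?add1n ?exprS ?expr0.
all: ring.
Qed.

Lemma signr_cyc (R : pzRingType) n (s : 'S_n) :
  (-1) ^+ (n - cyc s)%N = (-1) ^+ odd_perm s :> R.
Proof.
have cyc_le : (cyc s <= n)%N.
  by rewrite -[X in (_ <= X)%N]card_ord; apply: leq_imset_card.
by rewrite -signr_odd oddB // /odd_perm card_ord.
Qed.

Theorem corollary5 (n : nat) (hn : (1 <= n)%N) :
  \sum_(s : 'S_n) 'X ^+ cpk s * (-1) ^+ (n - cyc s)%N
    = (1 - 'X) ^+ (n./2) :> {poly int}.
Proof.
rewrite -sgn_cpk_polyE; apply: eq_bigr => s _.
by rewrite signr_cyc.
Qed.
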